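(* Let $\lambda>0$ and let $\{x_n\}$ be a sequence of positive real numbers satisfying $$\lim_{n\to\infty}x_n=0\quad\text{and}\quad\lim_{n\to\infty}\frac{\ln x_n}{\sum_{i=1}^nx_i^\lambda}=-b<0.$$ Then $$\lim_{n\to\infty}\frac{\ln x_n}{\ln n}=-\frac1\lambda.$$ *)

From Stdlib Require Import Reals.
From Coquelicot Require Import Coquelicot.
Open Scope R_scope.

(* S x lam n = sum_{i=1}^n x_i^lam  (sequences are indexed from 1; x 0 is unused) *)
Definition psum (x : nat -> R) (lam : R) (n : nat) : R :=
  sum_n_m (fun i => Rpower (x i) lam) 1 n.

(** Write [y n = x n ^ lam], [s n = y 1 + ... + y n] and [c = lam * b], so that
    [y n = exp (-(c + o(1)) s n)].  If [y (n+1) <= exp (- a s (n+1))] then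
    [exp (a s (n+1)) - exp (a s n) <= a], and if [exp (- a s (n+1)) <= y (n+1) <= 1]
    then this increment is at least [a exp (- a)].  Hence [exp (a s n)] grows
    linearly in [n] for every [a] on either side of [c], which forces
    [s n / ln n --> 1 / c]; multiplying by [ln (x n) / s n --> - b] gives the claim. *)

From Stdlib Require Import Reals Lra Lia Psatz.
From Coquelicot Require Import Coquelicot.
Open Scope R_scope.

Lemma is_lim_seq_eventually_lt (u : nat -> R) (l M : R) :
  is_lim_seq u l -> l < M -> eventually (fun n => u n < M).
Proof.
  intros Hu HlM.
  apply is_lim_seq_spec in Hu.
  assert (Heps : 0 < M - l) by lra.
  apply (filter_imp (fun n => Rabs (u n - l) < M - l)); [|exact (Hu (mkposreal _ Heps))].
  intros n Hn; apply Rabs_def2 in Hn; lra.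
Qed.

Lemma is_lim_seq_eventually_gt (u : nat -> R) (l m : R) :
  is_lim_seq u l -> m < l -> eventually (fun n => m < u n).
Proof.
  intros Hu Hml.
  apply is_lim_seq_spec in Hu.
  assert (Heps : 0 < l - m) by lra.
  apply (filter_imp (fun n => Rabs (u n - l) < l - m)); [|exact (Hu (mkposreal _ Heps))].
  intros n Hn; apply Rabs_def2 in Hn; lra.
Qed.

Lemma is_lim_seq_of_eventually_between (u : nat -> R) (l : R) :
  (forall M, l < M -> eventually (fun n => u n < M)) ->
  (forall m, m < l -> eventually (fun n => m < u n)) ->
  is_lim_seq u l.
Proof.
  intros Hup Hlow.
  apply is_lim_seq_spec; intros eps.
  apply (filter_imp (fun n => u n < l + eps /\ l - eps < u n)).
  - intros n [H1 H2]; apply Rabs_def1; lra.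
  - apply filter_and; [apply Hup | apply Hlow]; pose proof (cond_pos eps); lra.
Qed.

Lemma eventually_INR_gt_1 : eventually (fun n => 1 < INR n).
Proof.
  exists 2%nat; intros n Hn.
  apply (lt_INR 1); lia.
Qed.

Lemma is_lim_seq_inv_ln_INR : is_lim_seq (fun n => / ln (INR n)) 0.
Proof.
  assert (Hln : is_lim_seq (fun n => ln (INR n)) p_infty).
  { apply (is_lim_comp_seq ln INR p_infty p_infty is_lim_ln_p);
      [exists 0%nat; discriminate | exact is_lim_seq_INR]. }
  exact (is_lim_seq_inv _ _ Hln ltac:(discriminate)).
Qed.

Lemma linear_growth_le (u : nat -> R) (d : R) (N : nat) :
  (forall n, (N <= n)%nat -> u (S n) <= u n + d) ->
  forall k, u (N + k)%nat <= u N + d * INR k.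
Proof.
  intros Hstep k; induction k as [|k IH].
  - rewrite Nat.add_0_r; simpl; lra.
  - rewrite Nat.add_succ_r, S_INR.
    specialize (Hstep (N + k)%nat ltac:(lia)); lra.
Qed.

Lemma linear_growth_ge (u : nat -> R) (d : R) (N : nat) :
  (forall n, (N <= n)%nat -> u n + d <= u (S n)) ->
  forall k, u N + d * INR k <= u (N + k)%nat.
Proof.
  intros Hstep k; induction k as [|k IH].
  - rewrite Nat.add_0_r; simpl; lra.
  - rewrite Nat.add_succ_r, S_INR.
    specialize (Hstep (N + k)%nat ltac:(lia)); lra.
Qed.

Lemma eventually_le_linear (u : nat -> R) (d : R) :
  0 < d -> eventually (fun n => u (S n) <= u n + d) ->
  exists K, 0 < K /\ eventually (fun n => u n <= K * INR n).
Proof.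
  intros Hd [N HN].
  exists (Rabs (u N) + d); split; [pose proof (Rabs_pos (u N)); lra|].
  exists (S N); intros n Hn.
  replace n with (N + (n - N))%nat by lia.
  pose proof (linear_growth_le u d N HN (n - N)).
  assert (Hk : INR (n - N) <= INR (N + (n - N))) by (apply le_INR; lia).
  assert (H1 : 1 <= INR (N + (n - N))) by (apply (le_INR 1); lia).
  pose proof (Rle_abs (u N)); pose proof (Rabs_pos (u N)).
  nra.
Qed.

Lemma eventually_ge_linear (u : nat -> R) (d : R) :
  0 < d -> (forall n, 0 <= u n) -> eventually (fun n => u n + d <= u (S n)) ->
  exists K, 0 < K /\ eventually (fun n => K * INR n <= u n).
Proof.
  intros Hd Hu [N HN].
  exists (d / 2); split; [lra|].
  exists (2 * N)%nat; intros n Hn.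
  replace n with (N + (n - N))%nat by lia.
  pose proof (linear_growth_ge u d N HN (n - N)).
  assert (Hk : INR (N + (n - N)) <= 2 * INR (n - N)).
  { replace 2 with (INR 2) by reflexivity.
    rewrite <- mult_INR; apply le_INR; lia. }
  specialize (Hu N); nra.
Qed.

Lemma is_lim_seq_add_div_ln (l C : R) : is_lim_seq (fun n => l + C / ln (INR n)) l.
Proof.
  replace (Finite l) with (Finite (l + C * 0)) by (f_equal; ring).
  apply is_lim_seq_plus'; [apply is_lim_seq_const|].
  apply (is_lim_seq_scal_l _ C 0), is_lim_seq_inv_ln_INR.
Qed.

Lemma div_split_inv (a u L : R) : 0 < a -> 0 < L -> u / L = / a + (a * u - L) / a / L.
Proof. intros Ha HL; field; lra. Qed.

Lemma eventually_ratio_ln_lt (u : nat -> R) (a K M : R) :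
  0 < a -> 0 < K -> / a < M ->
  eventually (fun n => exp (a * u n) <= K * INR n) ->
  eventually (fun n => u n / ln (INR n) < M).
Proof.
  intros Ha HK HaM Hexp.
  pose proof (is_lim_seq_eventually_lt _ _ M (is_lim_seq_add_div_ln (/ a) (ln K / a)) HaM)
    as Hlim.
  generalize (filter_and _ _ eventually_INR_gt_1 (filter_and _ _ Hexp Hlim)).
  apply filter_imp; intros n (Hn & Hbound & HltM).
  assert (HL : 0 < ln (INR n)) by (rewrite <- ln_1; apply ln_increasing; lra).
  assert (Hau : a * u n <= ln K + ln (INR n)).
  { rewrite <- ln_mult, <- (ln_exp (a * u n)) by lra.
    apply ln_le; [apply exp_pos | exact Hbound]. }
  rewrite (div_split_inv a) by lra.
  enough ((a * u n - ln (INR n)) / a / ln (INR n) <= ln K / a / ln (INR n)) by lra.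
  apply Rmult_le_compat_r; [left; apply Rinv_0_lt_compat; lra|].
  apply Rmult_le_compat_r; [left; apply Rinv_0_lt_compat; lra | lra].
Qed.

Lemma eventually_ratio_ln_gt (u : nat -> R) (a K m : R) :
  0 < a -> 0 < K -> m < / a ->
  eventually (fun n => K * INR n <= exp (a * u n)) ->
  eventually (fun n => m < u n / ln (INR n)).
Proof.
  intros Ha HK HmA Hexp.
  pose proof (is_lim_seq_eventually_gt _ _ m (is_lim_seq_add_div_ln (/ a) (ln K / a)) HmA)
    as Hlim.
  generalize (filter_and _ _ eventually_INR_gt_1 (filter_and _ _ Hexp Hlim)).
  apply filter_imp; intros n (Hn & Hbound & HgtM).
  assert (HL : 0 < ln (INR n)) by (rewrite <- ln_1; apply ln_increasing; lra).
  assert (Hau : ln K + ln (INR n) <= a * u n).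
  { rewrite <- ln_mult, <- (ln_exp (a * u n)) by lra.
    apply ln_le; [nra | exact Hbound]. }
  rewrite (div_split_inv a) by lra.
  enough (ln K / a / ln (INR n) <= (a * u n - ln (INR n)) / a / ln (INR n)) by lra.
  apply Rmult_le_compat_r; [left; apply Rinv_0_lt_compat; lra|].
  apply Rmult_le_compat_r; [left; apply Rinv_0_lt_compat; lra | lra].
Qed.

Lemma exp_increment_le (a s y : R) :
  0 < a -> y <= exp (- a * (s + y)) -> exp (a * (s + y)) <= exp (a * s) + a.
Proof.
  intros Ha Hy.
  assert (Hsplit : exp (a * s) = exp (a * (s + y)) * exp (- a * y)).
  { rewrite <- exp_plus; f_equal; ring. }
  assert (Hinv : exp (a * (s + y)) * exp (- a * (s + y)) = 1).
  { rewrite <- exp_plus, <- exp_0; f_equal; ring. }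
  pose proof (exp_ineq1_le (- a * y)).
  pose proof (exp_pos (a * (s + y))).
  assert (y * exp (a * (s + y)) <= 1) by nra.
  nra.
Qed.

Lemma exp_increment_ge (a s y : R) :
  0 < a -> y <= 1 -> exp (- a * (s + y)) <= y ->
  exp (a * s) + a * exp (- a) <= exp (a * (s + y)).
Proof.
  intros Ha Hy1 Hy.
  assert (Hsplit : exp (a * (s + y)) = exp (a * s) * exp (a * y)).
  { rewrite <- exp_plus; f_equal; ring. }
  assert (Hback : exp (a * s) = exp (a * (s + y)) * exp (- a * y)).
  { rewrite <- exp_plus; f_equal; ring. }
  assert (Hinv : exp (a * (s + y)) * exp (- a * (s + y)) = 1).
  { rewrite <- exp_plus, <- exp_0; f_equal; ring. }
  pose proof (exp_ineq1_le (a * y)).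
  pose proof (exp_pos (a * (s + y))).
  pose proof (exp_pos (a * s)).
  pose proof (exp_pos (- a * y)).
  assert (Hmono : exp (- a) <= exp (- a * y)).
  { destruct (Req_dec y 1) as [->|Hne]; [right; f_equal; ring|].
    left; apply exp_increasing; nra. }
  assert (Hrel : 1 <= y * exp (a * (s + y))) by nra.
  assert (Hinc : exp (a * s) * (a * y) <= exp (a * (s + y)) - exp (a * s)) by nra.
  assert (Hrw : exp (a * s) * (a * y) = a * exp (- a * y) * (y * exp (a * (s + y))))
    by (rewrite Hback; ring).
  assert (a * exp (- a) * 1 <= a * exp (- a * y) * (y * exp (a * (s + y)))).
  { apply Rmult_le_compat; [pose proof (exp_pos (- a)); nra | lra | nra | exact Hrel]. }
  lra.
Qed.

Section PartialSums.

Variables (y s : nat -> R).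
Hypothesis s_succ : forall n, s (S n) = s n + y (S n).

Lemma exp_sum_le_linear (a : R) :
  0 < a -> eventually (fun n => y n <= exp (- a * s n)) ->
  exists K, 0 < K /\ eventually (fun n => exp (a * s n) <= K * INR n).
Proof.
  intros Ha [N HN].
  apply (eventually_le_linear (fun n => exp (a * s n)) a Ha).
  exists N; intros n Hn.
  rewrite s_succ; apply exp_increment_le; [exact Ha|].
  rewrite <- s_succ; apply HN; lia.
Qed.

Lemma exp_sum_ge_linear (a : R) :
  0 < a -> eventually (fun n => y n <= 1) ->
  eventually (fun n => exp (- a * s n) <= y n) ->
  exists K, 0 < K /\ eventually (fun n => K * INR n <= exp (a * s n)).
Proof.
  intros Ha [N1 HN1] [N2 HN2].
  assert (Hd : 0 < a * exp (- a)) by (pose proof (exp_pos (- a)); nra).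
  apply (eventually_ge_linear (fun n => exp (a * s n)) _ Hd);
    [intro n; left; apply exp_pos|].
  exists (N1 + N2)%nat; intros n Hn.
  rewrite s_succ; apply exp_increment_ge; [exact Ha | apply HN1; lia|].
  rewrite <- s_succ; apply HN2; lia.
Qed.

Lemma partial_sum_over_ln_lim (c : R) :
  0 < c ->
  (forall a, a < c -> eventually (fun n => y n <= exp (- a * s n))) ->
  (forall a, c < a -> eventually (fun n => exp (- a * s n) <= y n)) ->
  is_lim_seq (fun n => s n / ln (INR n)) (/ c).
Proof.
  intros Hc Hbelow Habove.
  pose proof (Rinv_0_lt_compat c Hc) as Hc'.
  apply is_lim_seq_of_eventually_between.
  - intros M HM.
    set (a := (/ M + c) / 2).
    assert (HMc : / M < c).
    { rewrite <- (Rinv_inv c); apply Rinv_lt_contravar; [nra | exact HM]. }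
    assert (HM0 : 0 < / M) by (apply Rinv_0_lt_compat; lra).
    assert (Ha : 0 < a) by (unfold a; lra).
    assert (HaM : / a < M).
    { rewrite <- (Rinv_inv M); apply Rinv_lt_contravar; [nra | unfold a; lra]. }
    destruct (exp_sum_le_linear a Ha (Hbelow a ltac:(unfold a; lra))) as (K & HK & Hexp).
    exact (eventually_ratio_ln_lt s a K M Ha HK HaM Hexp).
  - intros m Hm.
    assert (Hle1 : eventually (fun n => y n <= 1)).
    { apply (filter_imp (fun n => y n <= exp (- 0 * s n))); [|exact (Hbelow 0 Hc)].
      intros n; replace (- 0 * s n) with 0 by ring; rewrite exp_0; auto. }
    assert (Hchoice : exists a, c < a /\ m < / a).
    { destruct (Rle_lt_dec m 0) as [Hm0|Hm0].
      - exists (c + 1); split; [lra|].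
        pose proof (Rinv_0_lt_compat (c + 1) ltac:(lra)); lra.
      - assert (Hcm : c < / m).
        { rewrite <- (Rinv_inv c); apply Rinv_lt_contravar; [nra | exact Hm]. }
        exists ((c + / m) / 2); split; [lra|].
        rewrite <- (Rinv_inv m) at 1; apply Rinv_lt_contravar; [|lra].
        apply Rmult_lt_0_compat; [lra | apply Rinv_0_lt_compat; exact Hm0]. }
    destruct Hchoice as (a & Hca & Hma).
    destruct (exp_sum_ge_linear a ltac:(lra) Hle1 (Habove a Hca)) as (K & HK & Hexp).
    exact (eventually_ratio_ln_gt s a K m ltac:(lra) HK Hma Hexp).
Qed.

End PartialSums.

Lemma eventually_exp_le_of_ratio (g s : nat -> R) (c a : R) :
  eventually (fun n => 0 < s n) -> is_lim_seq (fun n => g n / s n) (- c) -> a < c ->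
  eventually (fun n => exp (g n) <= exp (- a * s n)).
Proof.
  intros Hs Hg Hac.
  generalize (filter_and _ _ Hs (is_lim_seq_eventually_lt _ _ (- a) Hg ltac:(lra))).
  apply filter_imp; intros n [Hsn Hratio].
  left; apply exp_increasing.
  apply (Rmult_lt_compat_r (s n)) in Hratio; [|exact Hsn].
  unfold Rdiv in Hratio; rewrite Rmult_assoc, Rinv_l, Rmult_1_r in Hratio by lra; lra.
Qed.

Lemma eventually_exp_ge_of_ratio (g s : nat -> R) (c a : R) :
  eventually (fun n => 0 < s n) -> is_lim_seq (fun n => g n / s n) (- c) -> c < a ->
  eventually (fun n => exp (- a * s n) <= exp (g n)).
Proof.
  intros Hs Hg Hca.
  generalize (filter_and _ _ Hs (is_lim_seq_eventually_gt _ _ (- a) Hg ltac:(lra))).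
  apply filter_imp; intros n [Hsn Hratio].
  left; apply exp_increasing.
  apply (Rmult_lt_compat_r (s n)) in Hratio; [|exact Hsn].
  unfold Rdiv in Hratio; rewrite Rmult_assoc, Rinv_l, Rmult_1_r in Hratio by lra; lra.
Qed.

Lemma psum_succ (x : nat -> R) (lam : R) (n : nat) :
  psum x lam (S n) = psum x lam n + Rpower (x (S n)) lam.
Proof.
  unfold psum; destruct n as [|n].
  - rewrite sum_n_n, sum_n_m_zero by lia; change zero with 0; ring.
  - rewrite sum_n_Sm by lia; reflexivity.
Qed.

Lemma psum_pos (x : nat -> R) (lam : R) (n : nat) :
  (1 <= n)%nat -> 0 < psum x lam n.
Proof.
  induction n as [|n IH]; intros Hn; [lia|].
  rewrite psum_succ.
  pose proof (exp_pos (lam * ln (x (S n)))).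
  destruct n as [|n].
  - unfold psum; rewrite sum_n_m_zero by lia; change zero with 0; unfold Rpower; lra.
  - specialize (IH ltac:(lia)); unfold Rpower; lra.
Qed.

Theorem lemma8 (lam b : R) (x : nat -> R) :
  0 < lam ->
  (forall n : nat, (1 <= n)%nat -> 0 < x n) ->
  is_lim_seq x 0 ->
  0 < b ->
  is_lim_seq (fun n => ln (x n) / psum x lam n) (- b) ->
  is_lim_seq (fun n => ln (x n) / ln (INR n)) (- / lam).
Proof.
  intros Hlam _ _ Hb Hlim.
  set (s := psum x lam).
  set (c := lam * b).
  assert (Hs : eventually (fun n => 0 < s n)) by (exists 1%nat; intros n; apply psum_pos).
  assert (Hg : is_lim_seq (fun n => lam * ln (x n) / s n) (- c)).
  { replace (- c) with (lam * - b) by (unfold c; ring).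
    apply (is_lim_seq_ext (fun n => lam * (ln (x n) / s n))); [intro n; unfold Rdiv; ring|].
    exact (is_lim_seq_scal_l _ lam (- b) Hlim). }
  assert (Hratio : is_lim_seq (fun n => s n / ln (INR n)) (/ c)).
  { apply (partial_sum_over_ln_lim (fun n => Rpower (x n) lam));
      [intro n; apply psum_succ | unfold c; nra | |].
    - intros a Ha; exact (eventually_exp_le_of_ratio _ _ c a Hs Hg Ha).
    - intros a Ha; exact (eventually_exp_ge_of_ratio _ _ c a Hs Hg Ha). }
  apply (is_lim_seq_ext_loc (fun n => (ln (x n) / s n) * (s n / ln (INR n)))).
  - generalize Hs; apply filter_imp; intros n Hsn.
    unfold Rdiv; rewrite Rmult_assoc, <- (Rmult_assoc (/ s n)), Rinv_l by lra; ring.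
  - replace (- / lam) with (- b * / c) by (unfold c; field; lra).
    exact (is_lim_seq_mult' _ _ _ _ Hlim Hratio).
Qed.
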